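(* Let $q\in K$. The linear map $\theta_q:\mathcal{H}_{\mathbb{T}}\to\mathcal{H}_{\mathcal{SP}}$, $\theta_q(\mathcal{T})=q^{c(\mathcal{T})}\,\overline{\mathcal{T}}$, is a surjective morphism of Hopf 2-associative algebras; that is, $\theta_q$ is surjective, $\theta_q(1)=1$, $\theta_q(x.y)=\theta_q(x).\theta_q(y)$, $\theta_q(x\downarrow y)=\theta_q(x)\downarrow\theta_q(y)$, and $\Delta\circ\theta_q=(\theta_q\otimes\theta_q)\circ\Delta$.
   Context: Let $K$ be a field. For $n\geq0$, $[n]=\{1,\ldots,n\}$, $\mathbb{T}_n$ is the set of topologies on $[n]$ and $\mathcal{H}_{\mathbb{T}}$ is the $K$-vector space with basis $\bigsqcup_n\mathbb{T}_n$; $1$ denotes the empty topology. For a topology $\mathcal{T}$ on finite $X$: $i\leq_{\mathcal{T}}j$ iff every open set containing $i$ contains $j$ (the open sets are exactly the subsets $I$ with $i\in I, i\leq_{\mathcal{T}}j\Rightarrow j\in I$); $i\sim_{\mathcal{T}}j$ iff $i\leq_{\mathcal{T}}j$ and $j\leq_{\mathcal{T}}i$. For $Y\subseteq X$, $\mathcal{T}_{\mid Y}=\{O\cap Y\mid O\in\mathcal{T}\}$; if $X$ is totally ordered of size $m$, $\mathrm{Std}(\mathcal{T})\in\mathbb{T}_m$ is the transport of $\mathcal{T}$ along the increasing bijection $X\to[m]$. For $O\subseteq\mathbb{N}$, $O(+n)=\{k+n\mid k\in O\}$. Products on $\mathcal{H}_{\mathbb{T}}$ (bilinear): for $\mathcal{T}\in\mathbb{T}_n,\mathcal{T}'\in\mathbb{T}_{n'}$,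 $\mathcal{T}.\mathcal{T}'$ has open sets $O\sqcup O'(+n)$, and $\mathcal{T}\downarrow\mathcal{T}'$ has open sets $O\sqcup[n'](+n)$ and $O'(+n)$ ($O\in\mathcal{T},O'\in\mathcal{T}'$). Coproduct: $\Delta(\mathcal{T})=\sum_{O\in\mathcal{T}}\mathrm{Std}(\mathcal{T}_{\mid[n]\setminus O})\otimes\mathrm{Std}(\mathcal{T}_{\mid O})$. A topology is $T_0$ if $\sim_{\mathcal{T}}$ is equality. $\mathcal{H}_{\mathcal{SP}}$ is the subspace of $\mathcal{H}_{\mathbb{T}}$ spanned by $T_0$ topologies; it is stable under $.$, $\downarrow$ and $\Delta$. For $\mathcal{T}\in\mathbb{T}_n$ with $\sim_{\mathcal{T}}$-classes $C_1,\ldots,C_k$ numbered so that $\min C_1<\cdots<\min C_k$, $\overline{\mathcal{T}}$ is the $T_0$ topology on $[k]$ whose preorder is $a\leq b$ iff $x\leq_{\mathcal{T}}y$ for $x\in C_a,y\in C_b$; and $c(\mathcal{T})=n-k$. Convention $q^0=1$ (also for $q=0$). *)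

(* topologies on [n] = 'I_n (elements 0..n-1 stand for 1..n),
   H_T modelled as the free K-module {malg K[TopT]} on the set TopT of all
   finite topologies on all [n]; H_T (x) H_T as the free module on TopT * TopT. *)
From HB Require Import structures.
From mathcomp Require Import all_boot all_order all_algebra.
From mathcomp Require Import finmap.
From mathcomp.multinomials Require Import monalg.
Unset Strict Implicit. Unset Printing Implicit Defensive.
Import GRing.Theory.
Local Open Scope ring_scope.

Definition is_topology {n} (F : {set {set 'I_n}}) : bool :=
  [&& set0 \in F, setT \in F,
      [forall O1 in F, forall O2 in F, O1 :|: O2 \in F] &
      [forall O1 in F, forall O2 in F, O1 :&: O2 \in F]].

Definition top n := {F : {set {set 'I_n}} | is_topology F}.

Lemma discrete_is_topology n : is_topology [set: {set 'I_n}].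
Proof. by apply/and4P; split; [rewrite inE|rewrite inE|apply/forall_inP=> *; apply/forall_inP=> *; rewrite inE ..]. Qed.

Definition mk_top {n} (F : {set {set 'I_n}}) : top n :=
  match boolP (is_topology F) with
  | AltTrue h => exist (fun G => is_topology G) F h
  | AltFalse _ => exist (fun G => is_topology G) _ (discrete_is_topology n)
  end.

Definition TopT := {n : nat & top n}.
Definition mkT {n} (F : {set {set 'I_n}}) : TopT := Tagged top (mk_top F).

Definition opens (t : TopT) : {set {set 'I_(tag t)}} := val (tagged t).

Definition tle (t : TopT) (i j : 'I_(tag t)) : bool :=
  [forall O in opens t, (i \in O) ==> (j \in O)].
Definition tequiv (t : TopT) (i j : 'I_(tag t)) : bool := tle t i j && tle t j i.
Definition T0 (t : TopT) : bool := [forall i, forall j, tequiv t i j ==> (i == j)].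

(* The empty topology on [0]: the unit 1. *)
Definition top_empty : TopT := @mkT 0 [set set0].

Definition tdot (t t' : TopT) : TopT :=
  @mkT (tag t + tag t')
    [set [set lshift (tag t') i | i in O] :|: [set rshift (tag t) j | j in O']
       | O : {set 'I_(tag t)} in opens t, O' : {set 'I_(tag t')} in opens t'].

Definition tdown (t t' : TopT) : TopT :=
  @mkT (tag t + tag t')
    ([set [set lshift (tag t') i | i in O] :|: [set rshift (tag t) j | j : 'I_(tag t')]
       | O : {set 'I_(tag t)} in opens t] :|:
     [set [set rshift (tag t) j | j in O'] | O' : {set 'I_(tag t')} in opens t']).

(* Std(T_|Y): transport of the restriction along the increasing bijection
   Y -> [#|Y|] (enum_val enumerates Y in increasing order). *)
Definition std_restr (t : TopT) (Y : {set 'I_(tag t)}) : TopT :=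
  @mkT #|Y| [set [set i : 'I_#|Y| | enum_val i \in O] | O : {set 'I_(tag t)} in opens t].

(* the minima of the ~_T classes, enumerated increasingly: numbering
   C_1,...,C_k with min C_1 < ... < min C_k *)
Definition class_mins (t : TopT) : {set 'I_(tag t)} :=
  [set i | [forall j, tequiv t i j ==> (nat_of_ord i <= nat_of_ord j)%N]].

Definition nclasses (t : TopT) : nat := #|class_mins t|.
Definition cT (t : TopT) : nat := (tag t - nclasses t)%N.

(* \overline{T}: the topology on [k] whose opens are the up-sets of the
   preorder a <= b iff x <=_T y for x in C_a, y in C_b (C_a represented by
   its minimum). *)
Definition tbar (t : TopT) : TopT :=
  @mkT (nclasses t)
    [set I : {set 'I_(nclasses t)} |
       [forall a, forall b,
          ((a \in I) && tle t (enum_val a) (enum_val b)) ==> (b \in I)]].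

Section Algebra.
Variable K : fieldType.

Definition HT := {malg K[TopT]}.
Definition HT2 := {malg K[(TopT * TopT)%type]}.

Definition in_HSP (x : HT) : Prop := forall t, t \in msupp x -> T0 t.

Definition hdot (x y : HT) : HT :=
  \sum_(s <- msupp x) \sum_(t <- msupp y) << x@_s * y@_t *g tdot s t >>.
Definition hdown (x y : HT) : HT :=
  \sum_(s <- msupp x) \sum_(t <- msupp y) << x@_s * y@_t *g tdown s t >>.

Definition htens (x y : HT) : HT2 :=
  \sum_(s <- msupp x) \sum_(t <- msupp y) << x@_s * y@_t *g (s, t) >>.

Definition Delta_basis (t : TopT) : HT2 :=
  \sum_(O in opens t) << (std_restr t (~: O), std_restr t O) >>.
Definition Delta (x : HT) : HT2 :=
  \sum_(s <- msupp x) x@_s *: Delta_basis s.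

Definition theta (q : K) (x : HT) : HT :=
  \sum_(s <- msupp x) x@_s *: (q ^+ cT s *: << tbar s >>).

Definition theta2 (q : K) (z : HT2) : HT2 :=
  \sum_(p <- msupp z) z@_p *: htens (theta q << p.1 >>) (theta q << p.2 >>).
End Algebra.
Arguments in_HSP {K}.
Arguments hdot {K}.
Arguments hdown {K}.
Arguments htens {K}.
Arguments Delta {K}.
Arguments theta {K}.
Arguments theta2 {K}.

From mathcomp Require Import all_boot all_order all_algebra.
From mathcomp Require Import finmap.
From mathcomp.multinomials Require Import monalg.
From mathcomp Require Import zify.
Set Implicit Arguments. Unset Strict Implicit. Unset Printing Implicit Defensive.

(* A topology on [n] is the same thing as a preorder on [n], the opens being its
   up-sets. In these terms T.T' and T \downarrow T' are sums of preorders, Std(T|Y)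
   is the restriction of the preorder to Y, and bar T is its restriction to the set
   of least elements of the ~-classes, with c(T) = n - #(classes). Restriction to
   the class minima commutes with sums of preorders and with restriction to
   ~-saturated sets (every open and every closed set is one), and the opens of
   bar T are exactly the traces on the minima of the opens of T. Hence bar is
   compatible with both products and with the coproduct, and c is additive over
   them; everything then extends linearly. Finally theta_q fixes the T0
   topologies, which gives surjectivity. *)

Definition is_preorder (T : Type) (r : rel T) := reflexive r /\ transitive r.

Definition upsets n (r : rel 'I_n) : {set {set 'I_n}} :=
  [set I : {set 'I_n} | [forall a, forall b, ((a \in I) && r a b) ==> (b \in I)]].

Definition top_of_rel n (r : rel 'I_n) : TopT := mkT (upsets r).

Lemma upsetsP n (r : rel 'I_n) (I : {set 'I_n}) :
  reflect (forall a b, a \in I -> r a b -> b \in I) (I \in upsets r).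
Proof.
rewrite inE; apply: (iffP forallP) => [H a b aI rab|H a].
  by have /forallP/(_ b)/implyP := H a; apply; rewrite aI.
by apply/forallP=> b; apply/implyP=> /andP[]; apply: H.
Qed.

Lemma upsets_topology n (r : rel 'I_n) : is_topology (upsets r).
Proof.
apply/and4P; split.
- by apply/upsetsP=> a b; rewrite inE.
- by apply/upsetsP=> a b; rewrite !inE.
- apply/forall_inP=> O1 /upsetsP H1; apply/forall_inP=> O2 /upsetsP H2.
  apply/upsetsP=> a b; rewrite !inE => /orP[] aO rab.
    by rewrite (H1 a b).
  by rewrite (H2 a b) ?orbT.
- apply/forall_inP=> O1 /upsetsP H1; apply/forall_inP=> O2 /upsetsP H2.
  by apply/upsetsP=> a b; rewrite !inE => /andP[aO1 aO2] rab; rewrite (H1 a b) // (H2 a b).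
Qed.

Lemma opens_mkT n (F : {set {set 'I_n}}) : is_topology F -> opens (mkT F) = F.
Proof.
move=> hF; rewrite /opens /mkT /mk_top /=.
by destruct (boolP (is_topology F)) as [h|h] => //; rewrite hF in h.
Qed.

Lemma opens_top_of_rel n (r : rel 'I_n) : opens (top_of_rel r) = upsets r.
Proof. exact/opens_mkT/upsets_topology. Qed.

Lemma tle_top_of_rel n (r : rel 'I_n) : is_preorder r -> tle (top_of_rel r) =2 r.
Proof.
move=> [rr rt] i j; rewrite /tle opens_top_of_rel.
apply/forall_inP/idP => [H|rij O /upsetsP HO]; last by apply/implyP=> iO; apply: HO rij.
have /H : [set k | r i k] \in upsets r.
  by apply/upsetsP=> a b; rewrite !inE => ria rab; apply: rt rab.
by rewrite !inE rr.
Qed.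

Lemma tle_preorder t : is_preorder (tle t).
Proof.
split=> [i|j i k /forall_inP H1 /forall_inP H2]; apply/forall_inP=> O HO.
  exact/implyP.
by apply/implyP=> /(implyP (H1 O HO)) /(implyP (H2 O HO)).
Qed.

Lemma opens_upsets t : opens t = upsets (tle t).
Proof.
case/and4P: (valP (tagged t)) => h0 hT /forall_inP hU /forall_inP hI.
apply/setP=> X; apply/idP/upsetsP => [XO a b aX /forall_inP/(_ X XO)/implyP|HX].
  exact.
pose U i := \bigcap_(O in opens t | i \in O) O.
have UO i : U i \in opens t.
  apply: (big_ind (fun Y => Y \in opens t)) => // [O1 O2 h1 h2|O /andP[] //].
  by have /forall_inP := hI O1 h1; apply.
have -> : X = \bigcup_(i in X) U i.
  apply/setP=> j; apply/idP/bigcupP => [jX|[i iX /bigcapP iU]].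
    by exists j => //; apply/bigcapP=> O /andP[].
  by apply: (HX i) => //; apply/forall_inP=> O OO; apply/implyP=> iO; apply: iU; rewrite OO.
apply: (big_ind (fun Y => Y \in opens t)) => // O1 O2 h1 h2.
by have /forall_inP := hU O1 h1; apply.
Qed.

Lemma top_of_relK t : top_of_rel (tle t) = t.
Proof.
case: t => n [F hF]; rewrite /top_of_rel /mkT; congr (Tagged _ _); apply: val_inj.
by rewrite -/(opens (mkT _)) opens_mkT ?upsets_topology // -opens_upsets.
Qed.

Lemma top_of_rel_ext n (r r' : rel 'I_n) : r =2 r' -> top_of_rel r = top_of_rel r'.
Proof.
move=> rr'; rewrite /top_of_rel; congr mkT; apply/setP=> X.
by apply/upsetsP/upsetsP => HX a b aX; [rewrite -rr' | rewrite rr']; apply: HX.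
Qed.

Lemma top_of_rel_cast n m (e : n = m) (r : rel 'I_n) (r' : rel 'I_m) :
  (forall i j, r i j = r' (cast_ord e i) (cast_ord e j)) -> top_of_rel r = top_of_rel r'.
Proof. by case: m / e r' => r' H; apply: top_of_rel_ext => i j; rewrite H !cast_ord_id. Qed.

Definition sum_rel m n (c : bool) (r : rel 'I_m) (r' : rel 'I_n) : rel 'I_(m + n) :=
  fun x y => match split x, split y with
  | inl i, inl j => r i j
  | inr i, inr j => r' i j
  | inl _, inr _ => c
  | inr _, inl _ => false
  end.

Lemma split_lshift m n (i : 'I_m) : split (lshift n i) = inl i.
Proof. exact: (unsplitK (inl i)). Qed.

Lemma split_rshift m n (j : 'I_n) : split (rshift m j) = inr j.
Proof. exact: (unsplitK (inr j)). Qed.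

Lemma split_ind m n (P : 'I_(m + n) -> Prop) :
  (forall i, P (lshift n i)) -> (forall j, P (rshift m j)) -> forall x, P x.
Proof. by move=> HL HR x; case: (split_ordP x) => y ->. Qed.

Lemma mem_lshift_imset m n (O : {pred 'I_m}) (i : 'I_m) :
  (lshift n i \in [set lshift n x | x in O]) = (i \in O).
Proof. exact/mem_imset/lshift_inj. Qed.

Lemma mem_rshift_imset m n (O : {pred 'I_n}) (j : 'I_n) :
  (rshift m j \in [set rshift m x | x in O]) = (j \in O).
Proof. exact/mem_imset/rshift_inj. Qed.

Lemma mem_rshift_lshift_imset m n (O : {pred 'I_m}) (j : 'I_n) :
  (rshift m j \in [set lshift n x | x in O]) = false.
Proof. by apply/imsetP=> [[x _ /eqP]]; rewrite eq_rlshift. Qed.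

Lemma mem_lshift_rshift_imset m n (O : {pred 'I_n}) (i : 'I_m) :
  (lshift n i \in [set rshift m x | x in O]) = false.
Proof. by apply/imsetP=> [[x _ /eqP]]; rewrite eq_lrshift. Qed.

Definition shiftE := (mem_lshift_imset, mem_rshift_imset, mem_rshift_lshift_imset,
  mem_lshift_rshift_imset, split_lshift, split_rshift).

Lemma sum_rel_preorder m n c (r : rel 'I_m) (r' : rel 'I_n) :
  is_preorder r -> is_preorder r' -> is_preorder (sum_rel c r r').
Proof.
move=> [rr rt] [rr' rt']; split; first by apply: split_ind => i; rewrite /sum_rel shiftE.
move=> y x z; move: x y z.
apply: split_ind => i; apply: split_ind => j; apply: split_ind => k.
all: rewrite /sum_rel ?shiftE //.
- exact: rt.
- exact: rt'.
Qed.

Lemma tdot_sum_rel s t : tdot s t = top_of_rel (sum_rel false (tle s) (tle t)).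
Proof.
rewrite /tdot /top_of_rel; congr mkT; rewrite !opens_upsets.
apply/setP=> X; apply/imset2P/upsetsP => [[O O' /upsetsP HO /upsetsP HO' ->]|HX].
  apply: split_ind => i; apply: split_ind => j; rewrite /sum_rel !inE !shiftE ?orbF //=.
    exact: HO.
  exact: HO'.
exists (lshift (tag t) @^-1: X) (@rshift (tag s) (tag t) @^-1: X).
- by apply/upsetsP=> a b; rewrite !inE => aX rab; apply: HX aX _; rewrite /sum_rel !shiftE.
- by apply/upsetsP=> a b; rewrite !inE => aX rab; apply: HX aX _; rewrite /sum_rel !shiftE.
- by apply/setP; apply: split_ind => i; rewrite !inE !shiftE inE ?orbF.
Qed.

Lemma tdown_sum_rel s t : tdown s t = top_of_rel (sum_rel true (tle s) (tle t)).
Proof.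
rewrite /tdown /top_of_rel; congr mkT; rewrite !opens_upsets.
apply/setP=> X; rewrite inE; apply/orP/upsetsP => [[]/imsetP[O /upsetsP HO ->]|HX].
- apply: split_ind => i; apply: split_ind => j; rewrite /sum_rel !inE !shiftE ?orbF ?orbT //.
  exact: HO.
- by apply: split_ind => i; apply: split_ind => j; rewrite /sum_rel ?shiftE //; apply: HO.
- case: (pickP (fun i => lshift (tag t) i \in X)) => [i0 i0X|noL].
    left; apply/imsetP; exists (lshift (tag t) @^-1: X).
      by apply/upsetsP=> a b; rewrite !inE => aX rab; apply: HX aX _; rewrite /sum_rel !shiftE.
    apply/setP; apply: split_ind => i; rewrite !inE !shiftE ?inE ?orbF //=.
    by apply: HX i0X _; rewrite /sum_rel !shiftE.
  right; apply/imsetP; exists (@rshift (tag s) (tag t) @^-1: X).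
    by apply/upsetsP=> a b; rewrite !inE => aX rab; apply: HX aX _; rewrite /sum_rel !shiftE.
  by apply/setP; apply: split_ind => i; rewrite !shiftE ?noL ?inE.
Qed.

Section IncreasingMaps.
Variables (m n : nat) (f : 'I_m -> 'I_n).
Hypothesis f_incr : {homo f : i j / (i < j)%N}.

Lemma incr_ltn_mono : {mono f : i j / (i < j)%N}.
Proof.
move=> i j; case: (ltngtP i j) => [/f_incr -> //|/f_incr /ltnW|/val_inj ->]; last by rewrite ltnn.
by rewrite leqNgt => /negbTE.
Qed.

Lemma incr_leq_mono : {mono f : i j / (i <= j)%N}.
Proof. by move=> i j; rewrite leqNgt incr_ltn_mono -leqNgt. Qed.

Lemma incr_inj : injective f.
Proof.
move=> i j E; apply/val_inj/eqP.
by rewrite eqn_leq -incr_leq_mono -[(j <= i)%N]incr_leq_mono E leqnn.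
Qed.

End IncreasingMaps.

Lemma ltn_enum_val n (A : {set 'I_n}) : {homo @enum_val _ (mem A) : a b / (a < b)%N}.
Proof.
move=> a b ab; rewrite (enum_val_nth (enum_val a)) (enum_val_nth (enum_val a) b).
have ltn_trans' : transitive (fun x y : 'I_n => (x < y)%N) by move=> x y z; apply: ltn_trans.
have sorted_enum : sorted (fun x y : 'I_n => (x < y)%N) (enum A).
  have -> : enum A = filter (mem A) (enum 'I_n) by rewrite enumT.
  apply: sorted_filter => //.
  by have := iota_ltn_sorted 0 n; rewrite -val_enum_ord sorted_map.
by apply: (sorted_ltn_nth ltn_trans' _ sorted_enum) => //; rewrite inE -cardE.
Qed.

Lemma imset_enum_val n (A : {set 'I_n}) : (@enum_val _ (mem A)) @: setT = A.
Proof.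
apply/setP=> x; apply/imsetP/idP => [[a _ ->]|xA]; first exact: enum_valP.
by exists (enum_rank_in xA x); rewrite ?enum_rankK_in.
Qed.

Definition rank_in n (A : {set 'I_n}) (x : 'I_n) := #|[set y in A | (y < x)%N]|.

Lemma card_ord_ltn m i : (i <= m)%N -> #|[set j : 'I_m | (j < i)%N]| = i.
Proof.
move=> im; have -> : [set j : 'I_m | (j < i)%N] = widen_ord im @: [set: 'I_i].
  apply/setP=> x; rewrite inE; apply/idP/imsetP => [xi|[y _ ->]]; last exact: (ltn_ord y).
  by exists (Ordinal xi); rewrite ?inE //; apply: val_inj.
by rewrite card_imset ?cardsT ?card_ord // => x y /(congr1 val) /= /val_inj.
Qed.

Lemma rank_in_incr m n (f : 'I_m -> 'I_n) :
  {homo f : i j / (i < j)%N} -> forall i, rank_in (f @: setT) (f i) = i.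
Proof.
move=> f_incr i; rewrite /rank_in.
have -> : [set y in f @: setT | (y < f i)%N] = f @: [set j : 'I_m | (j < i)%N].
  apply/setP=> y; rewrite inE; apply/andP/imsetP => [[/imsetP [j _ ->]]|[j]].
    by rewrite incr_ltn_mono // => ji; exists j; rewrite ?inE.
  by rewrite inE -(incr_ltn_mono f_incr) => ji ->; rewrite imset_f.
by rewrite card_imset ?card_ord_ltn 1?ltnW //; apply: incr_inj.
Qed.

Lemma rank_in_inj n (A : {set 'I_n}) : {in A &, injective (rank_in A)}.
Proof.
have rank_lt (x y : 'I_n) : x \in A -> (x < y)%N -> (rank_in A x < rank_in A y)%N.
  move=> xA xy; apply/proper_card/properP; split.
    by apply/subsetP=> z; rewrite !inE => /andP[-> zx]; rewrite (ltn_trans zx).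
  by exists x; rewrite !inE ?xA ?xy // ltnn.
move=> x y xA yA E; apply: val_inj.
by case: (ltngtP x y) => // [/(rank_lt _ _ xA)|/(rank_lt _ _ yA)]; rewrite E ltnn.
Qed.

(* Two increasing enumerations of A agree: compare the ranks of their values in A. *)
Lemma enum_val_incr n (A : {set 'I_n}) m (f : 'I_m -> 'I_n) :
  {homo f : i j / (i < j)%N} -> f @: setT = A ->
  {e : #|A| = m | forall a, enum_val a = f (cast_ord e a)}.
Proof.
move=> f_incr fA.
have e : #|A| = m by rewrite -fA card_imset ?cardsT ?card_ord //; apply: incr_inj.
exists e => a.
have fa_in : f (cast_ord e a) \in A by move: (imset_f f (in_setT (cast_ord e a))); rewrite fA.
apply: (rank_in_inj (enum_valP a) fa_in).
have := rank_in_incr f_incr (cast_ord e a); rewrite fA => ->.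
have := rank_in_incr (@ltn_enum_val n A) a; rewrite imset_enum_val => ->.
by [].
Qed.

Definition restr_rel n (A : {set 'I_n}) (r : rel 'I_n) : rel 'I_#|A| :=
  relpre (@enum_val _ (mem A)) r.
Arguments restr_rel {n} A r.

Lemma restr_rel_incr n (A : {set 'I_n}) m (f : 'I_m -> 'I_n) (r : rel 'I_n) :
  {homo f : i j / (i < j)%N} -> f @: setT = A ->
  top_of_rel (restr_rel A r) = top_of_rel (relpre f r).
Proof.
move=> f_incr fA; have [e ef] := enum_val_incr f_incr fA.
by apply: (top_of_rel_cast (e := e)) => i j; rewrite /restr_rel /= !ef.
Qed.

Lemma relpre_preorder m n (f : 'I_m -> 'I_n) (r : rel 'I_n) :
  is_preorder r -> is_preorder (relpre f r).
Proof. by case=> rr rt; split => [i|j i k]; [apply: rr | apply: rt]. Qed.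

Definition minima n (r : rel 'I_n) : {set 'I_n} :=
  [set i | [forall j, (r i j && r j i) ==> (i <= j)%N]].

Definition bar_rel n (r : rel 'I_n) : TopT := top_of_rel (restr_rel (minima r) r).

Lemma tbar_bar_rel t : tbar t = bar_rel (tle t).
Proof. by []. Qed.

Lemma cT_minima t : cT t = (tag t - #|minima (tle t)|)%N.
Proof. by []. Qed.

Lemma minimaP n (r : rel 'I_n) i :
  reflect (forall j, r i j -> r j i -> (i <= j)%N) (i \in minima r).
Proof.
rewrite inE; apply: (iffP forallP) => [H j rij rji|H j].
  by have /implyP := H j; apply; rewrite rij.
by apply/implyP=> /andP[]; apply: H.
Qed.

Lemma minima_ext n (r r' : rel 'I_n) : r =2 r' -> minima r = minima r'.
Proof.
move=> rr'; apply/setP=> i.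
by apply/minimaP/minimaP => H j; [rewrite -!rr' | rewrite !rr']; apply: H.
Qed.

Lemma bar_rel_ext n (r r' : rel 'I_n) : r =2 r' -> bar_rel r = bar_rel r'.
Proof.
move=> rr'; rewrite /bar_rel (@restr_rel_incr _ _ _ (@enum_val _ (mem (minima r')))).
- by apply: top_of_rel_ext => a b; rewrite /= rr'.
- exact: ltn_enum_val.
- by rewrite imset_enum_val (minima_ext rr').
Qed.

Lemma tbar_top_of_rel n (r : rel 'I_n) : is_preorder r -> tbar (top_of_rel r) = bar_rel r.
Proof. by move=> r_pre; rewrite tbar_bar_rel; apply/bar_rel_ext/tle_top_of_rel. Qed.

Lemma cT_top_of_rel n (r : rel 'I_n) :
  is_preorder r -> cT (top_of_rel r) = (n - #|minima r|)%N.
Proof. by move=> r_pre; rewrite cT_minima (minima_ext (tle_top_of_rel r_pre)). Qed.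

Lemma tle_bar_rel n (r : rel 'I_n) : is_preorder r ->
  tle (bar_rel r) =2 restr_rel (minima r) r.
Proof. by move=> r_pre; apply/tle_top_of_rel/relpre_preorder. Qed.

Lemma minima_exists n (r : rel 'I_n) : is_preorder r ->
  forall y, exists2 x, x \in minima r & r y x && r x y.
Proof.
case=> rr rt y.
case: (@arg_minnP _ y (fun j => r y j && r j y) val); first by rewrite rr.
move=> x /andP[ryx rxy] x_min; exists x; last by rewrite ryx.
apply/minimaP=> j rxj rjx; apply: x_min.
by rewrite (rt _ _ _ ryx rxj) (rt _ _ _ rjx rxy).
Qed.

Lemma T0_tbar t : T0 (tbar t).
Proof.
apply/forallP=> a; apply/forallP=> b; apply/implyP.
rewrite /tequiv !(tle_bar_rel (tle_preorder t)) => /andP[rab rba].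
have /minimaP a_min := enum_valP a; have /minimaP b_min := enum_valP b.
by apply/eqP/enum_val_inj/val_inj/eqP; rewrite eqn_leq a_min // b_min.
Qed.

Lemma minima_T0 t : T0 t -> minima (tle t) = setT.
Proof.
move=> /forallP t_T0; apply/setP=> i; rewrite in_setT; apply/minimaP=> j tij tji.
by have /forallP/(_ j)/implyP := t_T0 i; rewrite /tequiv tij tji => /(_ isT)/eqP ->.
Qed.

Lemma tbar_T0 t : T0 t -> tbar t = t.
Proof.
move=> t_T0; rewrite tbar_bar_rel /bar_rel (@restr_rel_incr _ _ _ id) //.
  exact: top_of_relK.
by rewrite minima_T0 // imset_id.
Qed.

Lemma cT_T0 t : T0 t -> cT t = 0%N.
Proof. by move=> t_T0; rewrite cT_minima minima_T0 // cardsT card_ord subnn. Qed.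

Lemma sum_rel_ext m n c (r1 r2 : rel 'I_m) (r1' r2' : rel 'I_n) :
  r1 =2 r2 -> r1' =2 r2' -> sum_rel c r1 r1' =2 sum_rel c r2 r2'.
Proof. by move=> E E' x y; rewrite /sum_rel; case: (split x) => a; case: (split y). Qed.

Section SumMap.
Variables (m n m' n' : nat) (f : 'I_m' -> 'I_m) (g : 'I_n' -> 'I_n).

Definition sum_map (x : 'I_(m' + n')) : 'I_(m + n) :=
  match split x with
  | inl a => lshift n (f a)
  | inr b => rshift m (g b)
  end.

Lemma sum_map_lshift a : sum_map (lshift n' a) = lshift n (f a).
Proof. by rewrite /sum_map split_lshift. Qed.

Lemma sum_map_rshift b : sum_map (rshift m' b) = rshift m (g b).
Proof. by rewrite /sum_map split_rshift. Qed.

Lemma sum_map_incr : {homo f : i j / (i < j)%N} -> {homo g : i j / (i < j)%N} ->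
  {homo sum_map : x y / (x < y)%N}.
Proof.
move=> f_incr g_incr.
apply: split_ind => a; apply: split_ind => b; rewrite ?sum_map_lshift ?sum_map_rshift /=.
- exact: f_incr.
- by move=> _; rewrite (leq_trans (ltn_ord (f a))) ?leq_addr.
- by move=> ba; have := leq_ltn_trans (leq_addr _ _) ba; rewrite ltnNge ltnW.
- by rewrite !ltn_add2l; apply: g_incr.
Qed.

Lemma relpre_sum_map c (r : rel 'I_m) (r' : rel 'I_n) :
  relpre sum_map (sum_rel c r r') =2 sum_rel c (relpre f r) (relpre g r').
Proof.
by apply: split_ind => a; apply: split_ind => b;
  rewrite /= ?sum_map_lshift ?sum_map_rshift /sum_rel ?shiftE.
Qed.

End SumMap.

Section MinimaSum.
Variables (m n : nat) (c : bool) (r : rel 'I_m) (r' : rel 'I_n).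

Lemma minima_sum_lshift i : (lshift n i \in minima (sum_rel c r r')) = (i \in minima r).
Proof.
apply/minimaP/minimaP => H j; first by have := H (lshift n j); rewrite /sum_rel !shiftE.
by move: j; apply: split_ind => j; rewrite /sum_rel !shiftE //; apply: H.
Qed.

Lemma minima_sum_rshift j : (rshift m j \in minima (sum_rel c r r')) = (j \in minima r').
Proof.
apply/minimaP/minimaP => H k.
  by have := H (rshift m k); rewrite /sum_rel !shiftE /= leq_add2l.
by move: k; apply: split_ind => k; rewrite /sum_rel !shiftE //= leq_add2l; apply: H.
Qed.

Let enum_minima := sum_map (@enum_val _ (mem (minima r))) (@enum_val _ (mem (minima r'))).

Lemma enum_minima_incr : {homo enum_minima : x y / (x < y)%N}.
Proof. by apply: sum_map_incr; apply: ltn_enum_val. Qed.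

Lemma minima_sum_rel : enum_minima @: setT = minima (sum_rel c r r').
Proof.
rewrite /enum_minima; apply/setP; apply: split_ind => [i|j].
  rewrite minima_sum_lshift; apply/imsetP/idP => [[x _]|i_min].
    move: x; apply: split_ind => x; rewrite ?sum_map_lshift ?sum_map_rshift.
      by move/lshift_inj ->; apply: enum_valP.
    by move/eqP; rewrite eq_lrshift.
  by exists (lshift _ (enum_rank_in i_min i)); rewrite ?sum_map_lshift ?enum_rankK_in.
rewrite minima_sum_rshift; apply/imsetP/idP => [[x _]|j_min].
  move: x; apply: split_ind => x; rewrite ?sum_map_lshift ?sum_map_rshift.
    by move/eqP; rewrite eq_rlshift.
  by move/rshift_inj ->; apply: enum_valP.
by exists (rshift _ (enum_rank_in j_min j)); rewrite ?sum_map_rshift ?enum_rankK_in.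
Qed.

Lemma bar_rel_sum_rel :
  bar_rel (sum_rel c r r') =
  top_of_rel (sum_rel c (restr_rel (minima r) r) (restr_rel (minima r') r')).
Proof.
rewrite /bar_rel (restr_rel_incr _ enum_minima_incr minima_sum_rel).
exact/top_of_rel_ext/relpre_sum_map.
Qed.

Lemma card_minima_sum_rel :
  #|minima (sum_rel c r r')| = (#|minima r| + #|minima r'|)%N.
Proof.
rewrite -minima_sum_rel card_imset ?cardsT ?card_ord //.
exact: incr_inj enum_minima_incr.
Qed.

End MinimaSum.

Lemma tbar_sum_rel c s t :
  tbar (top_of_rel (sum_rel c (tle s) (tle t))) =
  top_of_rel (sum_rel c (tle (tbar s)) (tle (tbar t))).
Proof.
have st_pre := sum_rel_preorder c (tle_preorder s) (tle_preorder t).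
rewrite tbar_top_of_rel // bar_rel_sum_rel.
by apply/top_of_rel_ext/sum_rel_ext => a b; rewrite (tle_bar_rel (tle_preorder _)).
Qed.

Lemma cT_sum_rel c s t :
  cT (top_of_rel (sum_rel c (tle s) (tle t))) = (cT s + cT t)%N.
Proof.
have st_pre := sum_rel_preorder c (tle_preorder s) (tle_preorder t).
rewrite cT_top_of_rel // card_minima_sum_rel !cT_minima.
have := max_card (minima (tle s)); have := max_card (minima (tle t)).
rewrite !card_ord; lia.
Qed.

Definition saturated n (r : rel 'I_n) (Y : {set 'I_n}) :=
  forall x y, x \in Y -> r x y -> r y x -> y \in Y.

Lemma upsets_saturated n (r : rel 'I_n) O : O \in upsets r -> saturated r O.
Proof. by move=> /upsetsP O_up x y xO rxy _; apply: O_up xO rxy. Qed.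

Lemma upsetsC_saturated n (r : rel 'I_n) O : O \in upsets r -> saturated r (~: O).
Proof.
move=> /upsetsP O_up x y; rewrite !inE => xO _ ryx; apply: contra xO => yO.
exact: O_up yO ryx.
Qed.

Lemma minima_restr_rel n (r : rel 'I_n) (Y : {set 'I_n}) : saturated r Y ->
  (@enum_val _ (mem Y)) @: minima (restr_rel Y r) = minima r :&: Y.
Proof.
move=> Y_sat; apply/setP=> y; rewrite inE; apply/imsetP/andP.
  case=> a /minimaP a_min ->; split; last exact: enum_valP.
  apply/minimaP=> j raj rja; have jY := Y_sat _ _ (enum_valP a) raj rja.
  have := a_min (enum_rank_in jY j); rewrite /restr_rel /= enum_rankK_in // => /(_ raj rja).
  by rewrite -(incr_leq_mono (@ltn_enum_val _ Y)) enum_rankK_in.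
case=> /minimaP y_min yY; exists (enum_rank_in yY y); last by rewrite enum_rankK_in.
apply/minimaP=> b; rewrite /restr_rel /= enum_rankK_in // => ryb rby.
by rewrite -(incr_leq_mono (@ltn_enum_val _ Y)) enum_rankK_in //; apply: y_min.
Qed.

Lemma card_minima_restr_rel n (r : rel 'I_n) (Y : {set 'I_n}) : saturated r Y ->
  #|minima (restr_rel Y r)| = #|minima r :&: Y|.
Proof. by move=> Y_sat; rewrite -minima_restr_rel // card_imset //; apply: enum_val_inj. Qed.

Lemma upsets_restr_rel n (r : rel 'I_n) (Y : {set 'I_n}) : is_preorder r ->
  [set [set i : 'I_#|Y| | enum_val i \in O] | O : {set 'I_n} in upsets r] = upsets (restr_rel Y r).
Proof.
case=> rr rt; apply/setP=> J; apply/imsetP/upsetsP => [[O /upsetsP O_up ->{J}] a b|J_up].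
  by rewrite !inE => aO rab; apply: O_up aO rab.
exists [set y | [exists a in J, r (enum_val a) y]].
  apply/upsetsP=> x y; rewrite !inE => /exists_inP [a aJ rax] rxy.
  by apply/exists_inP; exists a => //; apply: rt rxy.
apply/setP=> i; rewrite !inE; apply/idP/exists_inP => [iJ|[a aJ rai]].
  by exists i; rewrite ?rr.
exact: J_up aJ rai.
Qed.

Lemma std_restr_restr_rel t Y : std_restr t Y = top_of_rel (restr_rel Y (tle t)).
Proof.
by rewrite /std_restr /top_of_rel opens_upsets upsets_restr_rel //; apply: tle_preorder.
Qed.

Lemma restr_rel_restr_rel n (A : {set 'I_n}) (B : {set 'I_#|A|}) (r : rel 'I_n) :
  top_of_rel (restr_rel B (restr_rel A r)) =
  top_of_rel (restr_rel ((@enum_val _ (mem A)) @: B) r).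
Proof.
symmetry; apply: restr_rel_incr => [a b ab|]; first exact/ltn_enum_val/ltn_enum_val.
by rewrite imset_comp imset_enum_val.
Qed.

Lemma imset_enum_val_preimset n (A Y : {set 'I_n}) :
  (@enum_val _ (mem A)) @: [set a | enum_val a \in Y] = A :&: Y.
Proof.
apply/setP=> y; rewrite inE; apply/imsetP/andP => [[a]|[yA yY]].
  by rewrite inE => aY ->; split => //; apply: enum_valP.
by exists (enum_rank_in yA y); rewrite ?inE enum_rankK_in.
Qed.

Section Coproduct.
Variable t : TopT.
Local Notation r := (tle t).
Local Notation M := (minima (tle t)).

Lemma std_restr_tbar (Y : {set 'I_(tag t)}) : saturated r Y ->
  std_restr (tbar t) [set a : 'I_#|M| | enum_val a \in Y] = tbar (std_restr t Y).
Proof.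
move=> Y_sat; have r_pre := tle_preorder t.
rewrite !std_restr_restr_rel tbar_top_of_rel; last exact: relpre_preorder.
rewrite /bar_rel !restr_rel_restr_rel minima_restr_rel // -imset_enum_val_preimset.
rewrite -restr_rel_restr_rel; apply/top_of_rel_ext => a b.
by rewrite /restr_rel /= (tle_bar_rel r_pre).
Qed.

Lemma cT_std_restr (O : {set 'I_(tag t)}) : O \in opens t ->
  (cT (std_restr t (~: O)) + cT (std_restr t O))%N = cT t.
Proof.
rewrite opens_upsets => O_up.
have restr_pre Y : is_preorder (restr_rel Y r) by apply/relpre_preorder/tle_preorder.
rewrite !std_restr_restr_rel !cT_top_of_rel // cT_minima.
have O_sat := upsets_saturated O_up; have Oc_sat := upsetsC_saturated O_up.
rewrite !card_minima_restr_rel //.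
have := cardsC O; have := cardsID O M; rewrite setDE card_ord.
have := subset_leq_card (subsetIr M O); have := subset_leq_card (subsetIr M (~: O)).
lia.
Qed.

(* An up-set is determined by its minimal points, as every point is equivalent to one. *)
Lemma preimset_enum_minima_inj :
  {in upsets r &,
    injective (fun O : {set 'I_(tag t)} => [set a : 'I_#|M| | enum_val a \in O])}.
Proof.
have r_pre := tle_preorder t.
suff memE (O : {set 'I_(tag t)}) : O \in upsets r ->
    forall y, (y \in O) = [exists a : 'I_#|M|, (enum_val a \in O) && r (enum_val a) y].
  move=> O1 O2 O1_up O2_up /setP E; apply/setP=> y.
  rewrite (memE _ O1_up) (memE _ O2_up); apply: eq_existsb => a.
  by have := E a; rewrite !inE => ->.
move=> /upsetsP O_up y; apply/idP/existsP => [yO|[a /andP[aO ray]]]; last exact: O_up aO ray.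
have [x x_min /andP[ryx rxy]] := minima_exists r_pre y.
by exists (enum_rank_in x_min x); rewrite enum_rankK_in // rxy andbT (O_up y).
Qed.

Lemma sum_opens_tbar (V : nmodType) (F : TopT * TopT -> V) :
  (\sum_(P in opens (tbar t)) F (std_restr (tbar t) (~: P), std_restr (tbar t) P) =
   \sum_(O in opens t) F (tbar (std_restr t (~: O)), tbar (std_restr t O)))%R.
Proof.
have r_pre := tle_preorder t.
have -> : opens (tbar t) =
    [set [set a : 'I_#|M| | enum_val a \in O] | O : {set 'I_(tag t)} in upsets r].
  by rewrite upsets_restr_rel // opens_top_of_rel.
rewrite big_imset /=; last exact: preimset_enum_minima_inj.
rewrite opens_upsets; apply: eq_bigr => O O_up.
have -> : ~: [set a : 'I_#|M| | enum_val a \in O] = [set a | enum_val a \in ~: O].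
  by apply/setP=> a; rewrite !inE.
have O_sat := upsets_saturated O_up; have Oc_sat := upsetsC_saturated O_up.
by rewrite !std_restr_tbar.
Qed.
End Coproduct.

Import GRing.Theory.
Local Open Scope ring_scope.

Section LinearExtension.
Variables (K : fieldType) (T : choiceType) (V : lmodType K).

Definition linext (F : T -> V) (x : {malg K[T]}) : V := \sum_(s <- msupp x) x@_s *: F s.

Lemma linextEw F (d : {fset T}) x : (msupp x `<=` d)%fset ->
  linext F x = \sum_(k <- d) x@_k *: F k.
Proof.
move=> le; rewrite /linext (big_fset_incl _ le) //= => k _ /mcoeff_outdom ->.
by rewrite scale0r.
Qed.

Lemma linext0 F : linext F 0 = 0.
Proof. by rewrite /linext msupp0 big_seq_fset0. Qed.

Lemma linextD F x y : linext F (x + y) = linext F x + linext F y.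
Proof.
set d := (msupp x `|` msupp y)%fset.
rewrite (@linextEw F d (x + y)) ?msuppD_le // (@linextEw F d x) ?fsubsetUl //.
rewrite (@linextEw F d y) ?fsubsetUr // -big_split.
by apply: eq_bigr => k _; rewrite mcoeffD scalerDl.
Qed.

Lemma linextZ F c x : linext F (c *: x) = c *: linext F x.
Proof.
rewrite (@linextEw F (msupp x) (c *: x)) ?msuppZ_le // /linext scaler_sumr.
by apply: eq_bigr => k _; rewrite mcoeffZ scalerA.
Qed.

Lemma linext_sum F (I : Type) (l : seq I) (P : pred I) (G : I -> {malg K[T]}) :
  linext F (\sum_(i <- l | P i) G i) = \sum_(i <- l | P i) linext F (G i).
Proof. exact: (big_morph _ (linextD F) (linext0 F)). Qed.

Lemma linextU F c k : linext F << c *g k >> = c *: F k.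
Proof. by rewrite (linextEw _ msuppU_le) big_seq_fset1 mcoeffUU. Qed.

Lemma linextU1 F k : linext F << k >> = F k.
Proof. by rewrite linextU scale1r. Qed.

Lemma eq_linext F1 F2 x : F1 =1 F2 -> linext F1 x = linext F2 x.
Proof. by move=> E; apply: eq_bigr => k _; rewrite E. Qed.

Lemma linext_scale F c x : linext (fun t => c *: F t) x = c *: linext F x.
Proof. by rewrite /linext scaler_sumr; apply: eq_bigr => k _; rewrite !scalerA mulrC. Qed.

End LinearExtension.

Lemma monalgUZ (K : fieldType) (T : choiceType) (c : K) (k : T) :
  << c *g k >> = c *: (<< k >> : {malg K[T]}).
Proof.
by apply/malgP=> k'; rewrite mcoeffZ !mcoeffU; case: (k == k'); rewrite ?mulr1 ?mulr0.
Qed.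

Lemma linext_comp (K : fieldType) (T U : choiceType) (V : lmodType K)
    (F : U -> V) (G : T -> {malg K[U]}) x :
  linext F (linext G x) = linext (fun s => linext F (G s)) x.
Proof. by rewrite linext_sum; apply: eq_bigr => s _; rewrite linextZ. Qed.

Lemma mcoeff_linext (K : fieldType) (T U : choiceType) (F : T -> {malg K[U]}) x u :
  (linext F x)@_u = \sum_(s <- msupp x) x@_s * (F s)@_u.
Proof.
rewrite /linext (big_morph (mcoeff u) (mcoeffD u) (mcoeff0 u)).
by apply: eq_bigr => s _; apply: mcoeffZ.
Qed.

Lemma linext_monalgU (K : fieldType) (T : choiceType) (x : {malg K[T]}) :
  linext (fun k => << k >>) x = x.
Proof. by rewrite [RHS]monalgE; apply: eq_bigr => k _; rewrite monalgUZ. Qed.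

Section Theta.
Variables (K : fieldType) (q : K).

Definition theta_basis (s : TopT) : HT K := q ^+ cT s *: << tbar s >>.

Lemma thetaE (x : HT K) : theta q x = linext theta_basis x.
Proof. by []. Qed.

Lemma thetaU (s : TopT) : theta q << s >> = q ^+ cT s *: << tbar s >>.
Proof. exact: linextU1. Qed.

Lemma theta_T0 (s : TopT) : T0 s -> theta q << s >> = << s >>.
Proof. by move=> s_T0; rewrite thetaU tbar_T0 // cT_T0 // expr0 scale1r. Qed.

Lemma theta_in_HSP (x : HT K) : in_HSP (theta q x).
Proof.
move=> t; rewrite -mcoeff_neq0 thetaE mcoeff_linext; apply: contraR => t_nT0.
rewrite big1 // => s _; rewrite mcoeffZ mcoeffU.
suff /negbTE -> : tbar s != t by rewrite mulr0 mulr0.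
by apply: contraNneq t_nT0 => <-; apply: T0_tbar.
Qed.

Lemma theta_id_HSP (y : HT K) : in_HSP y -> theta q y = y.
Proof.
move=> y_SP; rewrite thetaE -[RHS]linext_monalgU.
by apply: eq_big_seq => s /y_SP s_T0; rewrite /theta_basis -thetaU theta_T0.
Qed.

Lemma bilinearE (U : choiceType) (B : TopT -> TopT -> U) (x y : HT K) :
  \sum_(s <- msupp x) \sum_(t <- msupp y) << x@_s * y@_t *g B s t >> =
  linext (fun s => linext (fun t => << B s t >> : {malg K[U]}) y) x.
Proof.
apply: eq_bigr => s _; rewrite /linext scaler_sumr; apply: eq_bigr => t _.
by rewrite monalgUZ scalerA.
Qed.

Lemma theta_bilinear (B : TopT -> TopT -> TopT) :
  (forall s t, tbar (B s t) = B (tbar s) (tbar t)) ->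
  (forall s t, cT (B s t) = (cT s + cT t)%N) ->
  forall x y : HT K,
  theta q (linext (fun s => linext (fun t => << B s t >> : HT K) y) x) =
  linext (fun s => linext (fun t => << B s t >> : HT K) (theta q y)) (theta q x).
Proof.
move=> tbarB cTB x y; rewrite !thetaE linext_comp [RHS]linext_comp.
apply: eq_linext => s; rewrite linext_comp /theta_basis linextZ linextU1 linext_comp.
rewrite -linext_scale; apply: eq_linext => t.
by rewrite linextU1 linextZ linextU1 /theta_basis tbarB cTB exprD scalerA.
Qed.

Lemma theta_hdot (x y : HT K) : theta q (hdot x y) = hdot (theta q x) (theta q y).
Proof.
rewrite /hdot !bilinearE; apply: theta_bilinear => s t; rewrite !tdot_sum_rel.
- exact: tbar_sum_rel.
- exact: cT_sum_rel.
Qed.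

Lemma theta_hdown (x y : HT K) : theta q (hdown x y) = hdown (theta q x) (theta q y).
Proof.
rewrite /hdown !bilinearE; apply: theta_bilinear => s t; rewrite !tdown_sum_rel.
- exact: tbar_sum_rel.
- exact: cT_sum_rel.
Qed.

Lemma htensU (a b : K) (u v : TopT) :
  htens (a *: << u >> : HT K) (b *: << v >>) = (a * b) *: << (u, v) >>.
Proof.
rewrite /htens bilinearE linextZ linextU1 -linext_scale linextZ linextU1.
by rewrite scalerA mulrC.
Qed.

Lemma theta2E (z : HT2 K) :
  theta2 q z = linext (fun p => htens (theta q << p.1 >>) (theta q << p.2 >>)) z.
Proof. by []. Qed.

Lemma DeltaE (x : HT K) : Delta x = linext (@Delta_basis K) x.
Proof. by []. Qed.

Lemma theta2_Delta_basis (s : TopT) :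
  theta2 q (Delta_basis K s) = q ^+ cT s *: Delta_basis K (tbar s).
Proof.
rewrite theta2E /Delta_basis linext_sum scaler_sumr.
rewrite (sum_opens_tbar s (fun p => q ^+ cT s *: (<< p >> : HT2 K))).
apply: eq_bigr => O O_open; rewrite linextU1.
(* A bare [rewrite thetaU] also tries, at great cost, to unify with the right-hand side. *)
rewrite [X in htens X _]thetaU [X in htens _ X]thetaU htensU -exprD.
by rewrite cT_std_restr.
Qed.

Lemma Delta_theta (x : HT K) : Delta (theta q x) = theta2 q (Delta x).
Proof.
rewrite !DeltaE thetaE theta2E !linext_comp; apply: eq_linext => s.
by rewrite linextZ linextU1 -theta2E theta2_Delta_basis.
Qed.

End Theta.

Theorem proposition8 (K : fieldType) (q : K) :
  (forall x : HT K, in_HSP (theta q x)) /\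
  (forall y : HT K, in_HSP y -> exists x : HT K, theta q x = y) /\
  theta q << top_empty >> = << top_empty >> /\
  (forall x y : HT K, theta q (hdot x y) = hdot (theta q x) (theta q y)) /\
  (forall x y : HT K, theta q (hdown x y) = hdown (theta q x) (theta q y)) /\
  (forall x : HT K, Delta (theta q x) = theta2 q (Delta x)).
Proof.
split; first exact: theta_in_HSP.
split; first by move=> y y_SP; exists y; apply: theta_id_HSP.
split; first by apply: theta_T0; apply/forallP => -[].
split; first exact: theta_hdot.
split; first exact: theta_hdown.
exact: Delta_theta.
Qed.
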